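(* Let $r$ be a positive integer and suppose $\vartheta> 1/(1+r)$, $\vartheta<1$. Let $(Z_t)$ be the random walk of the context with $c=1$. Then $$\pi(u,1,r,\vartheta)=\varrho(\vartheta)^u\quad\text{for all } u\in\mathbb{N}_0,$$ where $\varrho(\vartheta)=\pi(1,1,r,\vartheta)$ is the unique solution in $[0,1)$ of $\varrho=(1-\vartheta)+\vartheta\varrho^{r+1}$. Moreover, for the single-agent trust model with prior parameters $\alpha,\beta\in\mathbb{N}$ and $c=1$, the quitting probability satisfies $p_{\rm quit}(\alpha,\beta,1,r,\vartheta)=\pi(u_{\rm crit},1,r,\vartheta)$ with $u_{\rm crit}=r\alpha-\beta+1$.
   Context: Random walk: for $\vartheta\in(0,1)$ and positive integers $c,r$, let $Z_0=0$ and $Z_t=Z_{t-1}+\Delta_t$ with $\Delta_t$ i.i.d., $\Delta_t=+c$ with probability $1-\vartheta$ and $\Delta_t=-r$ with probability $\vartheta$. Define $\pi(u,c,r,\vartheta):=\mathbb{P}(\exists t\ge 0: Z_t\ge u)$. Single-agent trust model: $(X_t)$ i.i.d. Bernoulli$(\vartheta)$; $\hat S_t=\sum_{s\le t}X_s\mathbf{1}_{\{A_s=1\}}$, $\hat F_t=\sum_{s\le t}(1-X_s)\mathbf{1}_{\{A_s=1\}}$, $\hat\vartheta_t=\frac{\alpha+\hat S_t}{\alpha+\beta+\hat S_t+\hat F_t}$; $A_t=1$ iff $r\hat\vartheta_n-c(1-\hat\vartheta_n)\ge0$ for all $n\le t-1$; $\tau:=\inf\{t\in\mathbb{N}\cup\{\infty\}: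 r\hat\vartheta_t-c(1-\hat\vartheta_t)<0\}$; $p_{\rm quit}(\alpha,\beta,c,r,\vartheta):=\mathbb{P}(\tau<\infty)$. (The agent places trust while $c\hat F_t-r\hat S_t\le r\alpha-c\beta$.) *)

From HB Require Import structures.
From mathcomp Require Import all_boot all_order all_algebra.
From mathcomp Require Import all_classical all_reals all_analysis.
Set Implicit Arguments. Unset Strict Implicit. Unset Printing Implicit Defensive.
Import Order.TTheory GRing.Theory Num.Theory.
Local Open Scope classical_set_scope.
Local Open Scope ring_scope.

Definition iid_seq {d : measure_display} {T : measurableType d} {R : realType}
  (P : probability T R) {V : eqType} (Y : nat -> T -> V) : Prop :=
  [/\ (forall i v, measurable [set w | Y i w = v]),
      (forall i v, P [set w | Y i w = v] = P [set w | Y 0%N w = v]) &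
      (forall (I : seq nat) (v : nat -> V), uniq I ->
         P [set w | forall i, i \in I -> Y i w = v i]
         = (\prod_(i <- I) P [set w | Y i w = v i])%E)].

(* Increments Delta_t (t = 1,2,... is stored at index t-1): i.i.d., equal to
   +c with probability 1 - theta and to -r with probability theta. *)
Definition walk_law {d : measure_display} {T : measurableType d} {R : realType}
  (P : probability T R) (Delta : nat -> T -> int) (c r : nat) (theta : R) : Prop :=
  [/\ iid_seq P Delta,
      P [set w | Delta 0%N w = c%:Z] = (1 - theta)%:E &
      P [set w | Delta 0%N w = - r%:Z] = theta%:E].

Definition walkZ {T : Type} (Delta : nat -> T -> int) (t : nat) (w : T) : int :=
  \sum_(s < t) Delta s w.

(* The event {exists t >= 0, Z_t >= u}; pi(u,c,r,theta) is its probability. *)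
Definition walk_reach {T : Type} (Delta : nat -> T -> int) (u : int) : set T :=
  [set w | exists t : nat, u <= walkZ Delta t w].

(* Trust model: X_t (t >= 1, index 0 unused) i.i.d. Bernoulli(theta)
   (X_t = true means X_t = 1). *)
Definition bernoulli_law {d : measure_display} {T : measurableType d} {R : realType}
  (P : probability T R) (X : nat -> T -> bool) (theta : R) : Prop :=
  iid_seq P X /\ P [set w | X 0%N w = true] = theta%:E.

Section Trust.
Context {R : realType} (alpha beta c r : nat) {T : Type} (X : nat -> T -> bool).

Definition theta_hat_of (s f : nat) : R :=
  (alpha%:R + s%:R) / (alpha%:R + beta%:R + s%:R + f%:R).

Definition trust_ok (s f : nat) : bool :=
  0 <= r%:R * theta_hat_of s f - c%:R * (1 - theta_hat_of s f).

(* trust_state t w = (S_t, F_t, b_t) where S_t = \hat S_t, F_t = \hat F_t and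
   b_t = [forall n <= t, trust condition at time n], i.e. b_t = (A_{t+1} == 1).
   At time t+1 the observation X_{t+1} is counted iff A_{t+1} = 1. *)
Fixpoint trust_state (t : nat) (w : T) : nat * nat * bool :=
  match t with
  | 0 => (0%N, 0%N, trust_ok 0 0)
  | t'.+1 =>
      let: (s0, f0, ok) := trust_state t' w in
      let: (s1, f1) :=
        if ok then (s0 + X t w, f0 + ~~ X t w)%N else (s0, f0) in
      (s1, f1, ok && trust_ok s1 f1)
  end.

Definition S_hat (t : nat) (w : T) : nat := (trust_state t w).1.1.
Definition F_hat (t : nat) (w : T) : nat := (trust_state t w).1.2.
Definition theta_hat (t : nat) (w : T) : R := theta_hat_of (S_hat t w) (F_hat t w).

Definition quit_event : set T :=
  [set w | exists t : nat,
     r%:R * theta_hat t w - c%:R * (1 - theta_hat t w) < 0].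
End Trust.

(* The polynomial identity (1-θ) + θx^(r+1) - x = (1-x)(1 - θ Σ_(k≤r) x^k) reduces
   the fixed-point equation on [0,1) to the root of the second factor, which
   decreases strictly from 1-θ > 0 at 0 to 1-θ(r+1) < 0 at 1.

   Let Φ_n(u) be the probability that the walk reaches level u within n steps,
   a finite sum over the 2^n step sequences, with
   Φ_(n+1)(u) = (1-θ) Φ_n(u-1) + θ Φ_n(u+r) for u > 0.  Because ρ is a fixed
   point, ρ^u solves this recurrence exactly; any s in (ρ,1) satisfies
   (1-θ) + θs^(r+1) = λs with λ < 1, and induction on n gives
   ρ^u - λ^n s^u ≤ Φ_n(u) ≤ ρ^u.  Hence Φ_n(u) → ρ^u, while Φ_n(u) → π(u) by
   continuity of the measure along increasing events.

   In the trust model, F̂_t - r Ŝ_t moves by +1 on a failure and by -r on a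
   success as long as trust is placed, and the trust condition first fails
   exactly when it reaches rα - β + 1.  The quitting probability is therefore
   also the limit of Φ_n(rα - β + 1). *)

From HB Require Import structures.
From mathcomp Require Import all_boot all_order all_algebra.
From mathcomp Require Import all_classical all_reals all_analysis.
From mathcomp Require Import ring lra zify.
Import Order.TTheory GRing.Theory Num.Theory.
Import numFieldNormedType.Exports.
Local Open Scope classical_set_scope.
Local Open Scope ring_scope.

Lemma oppz_nat_eq1 (n : nat) : (- n%:Z == 1) = false.
Proof. by case: n. Qed.

Lemma ltr_sum_exprn (R : realType) (r : nat) (x y : R) :
  (0 < r)%N -> 0 <= x -> x < y ->
  \sum_(k < r.+1) x ^+ k < \sum_(k < r.+1) y ^+ k.
Proof.
move=> r0 x0 xy; rewrite big_ord_recl [ltRHS]big_ord_recl !expr0 ltrD2l.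
apply: ltr_sum; first by apply/hasP; exists (Ordinal r0); rewrite ?mem_index_enum.
by move=> i _; rewrite ltrXn2r.
Qed.

Section RuinEquation.
Context {R : realType} (r : nat) (th : R).

Definition ruin_map (x : R) : R := (1 - th) + th * x ^+ r.+1.

Definition ruin_factor (x : R) : R := 1 - th * \sum_(k < r.+1) x ^+ k.

Lemma ruin_mapBx x : ruin_map x - x = (1 - x) * ruin_factor x.
Proof.
rewrite /ruin_map /ruin_factor; set S := \sum_(k < r.+1) x ^+ k.
have geom : (1 - x) * S = 1 - x ^+ r.+1.
  by rewrite -[1 - x ^+ r.+1]opprB subrX1 -mulNr opprB.
by rewrite mulrBr mulr1 mulrCA geom; ring.
Qed.

Lemma ruin_factor_fixed x : x < 1 -> x = ruin_map x -> ruin_factor x = 0.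
Proof.
move=> x1 fx; have /eqP : (1 - x) * ruin_factor x = 0 by rewrite -ruin_mapBx -fx subrr.
by rewrite mulf_eq0 subr_eq0 (gt_eqF x1) => /eqP.
Qed.

Lemma continuous_ruin_factor : continuous ruin_factor.
Proof.
have -> : ruin_factor = horner (1 - th *: \sum_(k < r.+1) 'X^k).
  apply/funext => x; rewrite /ruin_factor !hornerE horner_sum.
  by congr (_ - _ * _); apply: eq_bigr => i _; rewrite hornerXn.
exact: continuous_horner.
Qed.

Hypotheses (r_gt0 : (0 < r)%N) (th_gt0 : 0 < th).

Lemma ruin_factor_ltr x y : 0 <= x -> x < y -> ruin_factor y < ruin_factor x.
Proof. by move=> x0 xy; rewrite ltrD2l ltrN2 ltr_pM2l // ltr_sum_exprn. Qed.

Lemma exists_unique_ruin_root : th <= 1 -> 1 < th * (1 + r%:R) ->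
  exists rho, [/\ 0 <= rho, rho < 1, rho = ruin_map rho &
    forall rho', 0 <= rho' -> rho' < 1 -> rho' = ruin_map rho' -> rho' = rho].
Proof.
move=> th_le1 th_big.
have f0 : ruin_factor 0 = 1 - th.
  rewrite /ruin_factor big_ord_recl expr0 big1 ?addr0 ?mulr1 // => i _.
  by rewrite expr0n.
have f1 : ruin_factor 1 = 1 - th * (1 + r%:R).
  rewrite /ruin_factor (eq_bigr (fun _ => 1)) => [|i _]; last by rewrite expr1n.
  by rewrite sumr_const card_ord mulrS.
have [rho] : exists2 rho, rho \in `[0, 1] & ruin_factor rho = 0.
  apply: IVT; [exact: ler01 | exact/continuous_subspaceT/continuous_ruin_factor |].
  by rewrite f0 f1 ge_min le_max; apply/andP; split; apply/orP; [right|left]; lra.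
rewrite in_itv /= => /andP[rho0 rho_le1] f_rho.
have rho1 : rho < 1.
  rewrite lt_neqAle rho_le1 andbT; apply/eqP => rho_eq1.
  by move: f_rho; rewrite rho_eq1 f1; lra.
have fix_rho : rho = ruin_map rho.
  by apply/eqP; rewrite eq_sym -subr_eq0 ruin_mapBx f_rho mulr0.
exists rho; split => // rho' rho'0 rho'1 /(ruin_factor_fixed _ rho'1) f_rho'.
case: (ltgtP rho' rho) => // lt_rho.
  by have := ruin_factor_ltr _ _ rho'0 lt_rho; rewrite f_rho f_rho' ltxx.
by have := ruin_factor_ltr _ _ rho0 lt_rho; rewrite f_rho f_rho' ltxx.
Qed.
End RuinEquation.

Section ReachProb.
Context {R : realType} (r : nat) (th : R).

Definition step_weight (x : int) : R := if x == 1 then 1 - th else th.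

Fixpoint step_paths (n : nat) : seq (seq int) :=
  if n is n'.+1 then
    [seq 1 :: s | s <- step_paths n'] ++ [seq - r%:Z :: s | s <- step_paths n']
  else [:: [::]].

Fixpoint reaches (u : int) (s : seq int) : bool :=
  (u <= 0) || (if s is x :: s' then reaches (u - x) s' else false).

Definition path_weight (s : seq int) : R := \prod_(x <- s) step_weight x.

Definition reach_prob (n : nat) (u : int) : R :=
  \sum_(s <- step_paths n | reaches u s) path_weight s.

Lemma step_weightN : step_weight (- r%:Z) = th.
Proof. by rewrite /step_weight oppz_nat_eq1. Qed.

Lemma path_weight_cons x s : path_weight (x :: s) = step_weight x * path_weight s.
Proof. by rewrite /path_weight big_cons. Qed.

Lemma sum_path_weight n : \sum_(s <- step_paths n) path_weight s = 1.
Proof.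
elim: n => [|n IH]; first by rewrite big_seq1 /path_weight big_nil.
rewrite /= big_cat !big_map !(eq_bigr _ (fun s _ => path_weight_cons _ s)) /=.
by rewrite -!mulr_sumr IH step_weightN /step_weight eqxx !mulr1 subrK.
Qed.

Lemma mem_step_paths n s : s \in step_paths n ->
  size s = n /\ (forall x, x \in s -> x = 1 \/ x = - r%:Z).
Proof.
elim: n s => [|n IH] s /=; first by rewrite inE => /eqP ->.
rewrite mem_cat => /orP[] /mapP [t /IH [size_t t_steps] ->].
  by split=> [|x]; rewrite /= ?size_t // inE => /orP[/eqP ->|/t_steps //]; left.
by split=> [|x]; rewrite /= ?size_t // inE => /orP[/eqP ->|/t_steps //]; right.
Qed.

Lemma uniq_step_paths n : uniq (step_paths n).
Proof.
elim: n => [|n IH] //=.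
rewrite cat_uniq !map_inj_uniq ?IH ?andbT; [|by move=> ? ? []..].
apply/hasPn => _ /mapP [t _ ->]; apply/negP => /mapP [t' _ []].
by case: (r).
Qed.

Lemma reach_prob_le0 n u : u <= 0 -> reach_prob n u = 1.
Proof.
move=> u_le0; rewrite /reach_prob -(sum_path_weight n); apply: eq_bigl => s.
by case: s => [|x s] /=; rewrite u_le0.
Qed.

Lemma reach_prob0 u : 0 < u -> reach_prob 0 u = 0.
Proof. by move=> u_gt0; rewrite /reach_prob big_cons /= leNgt u_gt0 big_nil. Qed.

Lemma reach_probS n u : 0 < u ->
  reach_prob n.+1 u = (1 - th) * reach_prob n (u - 1) + th * reach_prob n (u + r%:Z).
Proof.
move=> u_gt0; rewrite /reach_prob /= big_cat !big_map /= !leNgt u_gt0 /= opprK.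
rewrite !(eq_bigr _ (fun s _ => path_weight_cons _ s)) /=.
by rewrite -!mulr_sumr step_weightN /step_weight eqxx.
Qed.

Lemma reach_prob_bounds (rho s lam : R) :
  0 <= th <= 1 -> 0 <= lam -> 0 <= rho <= s ->
  rho = ruin_map r th rho -> ruin_map r th s = lam * s ->
  forall n k, rho ^+ k - lam ^+ n * s ^+ k <= reach_prob n k%:Z <= rho ^+ k.
Proof.
move=> /andP[th0 th1] lam0 /andP[rho0 rho_s] fix_rho super_s.
have th1' : 0 <= 1 - th by rewrite subr_ge0.
elim=> [|n IH] [|k].
- by rewrite reach_prob_le0 // !expr0 mulr1 subrr lexx ler01.
- rewrite reach_prob0 // expr0 mul1r subr_le0 exprn_ge0 ?andbT //.
  by apply: lerXn2r => //; apply: le_trans rho_s.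
- by rewrite reach_prob_le0 // !expr0 mulr1 lexx andbT lerBlDr lerDl exprn_ge0.
rewrite reach_probS //.
have -> : k.+1%:Z - 1 = k%:Z by lia.
have -> : k.+1%:Z + r%:Z = (k + r.+1)%N%:Z by lia.
have /andP[lo1 up1] := IH k; have /andP[lo2 up2] := IH (k + r.+1)%N.
have rho_rec : rho ^+ k.+1 = (1 - th) * rho ^+ k + th * rho ^+ (k + r.+1).
  by rewrite exprS {1}fix_rho /ruin_map mulrDl -mulrA -exprD addnC.
have super_rec : lam ^+ n.+1 * s ^+ k.+1 =
    (1 - th) * (lam ^+ n * s ^+ k) + th * (lam ^+ n * s ^+ (k + r.+1)).
  rewrite !exprS exprD.
  have -> : lam * lam ^+ n * (s * s ^+ k) = lam ^+ n * s ^+ k * (lam * s) by ring.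
  by rewrite -super_s /ruin_map; ring.
rewrite rho_rec super_rec; apply/andP; split.
  by have := ler_wpM2l th1' lo1; have := ler_wpM2l th0 lo2; lra.
by have := ler_wpM2l th1' up1; have := ler_wpM2l th0 up2; lra.
Qed.

Lemma reach_prob_cvg (rho : R) : (0 < r)%N -> 0 < th < 1 ->
  0 <= rho < 1 -> rho = ruin_map r th rho ->
  forall k : nat, reach_prob n k%:Z @[n --> \oo] --> rho ^+ k.
Proof.
move=> r0 /andP[th0 th1] /andP[rho0 rho1] fix_rho k.
pose s := (rho + 1) / 2.
have s0 : 0 < s by rewrite /s; lra.
have rho_s : rho < s by rewrite /s; lra.
have s1 : s < 1 by rewrite /s; lra.
have f_s : ruin_factor r th s < 0.
  by rewrite -(ruin_factor_fixed _ _ _ rho1 fix_rho) ruin_factor_ltr.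
pose lam := ruin_map r th s / s.
have super_s : ruin_map r th s = lam * s by rewrite /lam divfK // gt_eqF.
have lam0 : 0 <= lam.
  apply: divr_ge0; last exact: ltW.
  by apply: addr_ge0; rewrite ?subr_ge0 ?mulr_ge0 ?exprn_ge0 ?ltW.
have lam1 : lam < 1.
  by rewrite ltr_pdivrMr // mul1r -subr_lt0 ruin_mapBx pmulr_rlt0 // subr_gt0.
have th01 : 0 <= th <= 1 by rewrite !ltW.
have rho_le_s : 0 <= rho <= s by rewrite rho0 ltW.
have bounds := reach_prob_bounds _ _ _ th01 lam0 rho_le_s fix_rho super_s.
apply: (@squeeze_cvgr _ _ _ _ (fun n => rho ^+ k - lam ^+ n * s ^+ k) (fun=> rho ^+ k)).
- by apply: nearW => n; exact: bounds.
- rewrite -[X in _ --> X]subr0; apply: cvgB; first exact: cvg_cst.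
  rewrite -(mul0r (s ^+ k)); apply: cvgM; last exact: cvg_cst.
  by apply: cvg_expr; rewrite ger0_norm.
- exact: cvg_cst.
Qed.
End ReachProb.

Definition window {T : Type} (D : nat -> T -> int) (k n : nat) (w : T) : seq int :=
  [seq D i w | i <- iota k n].

Lemma window_eqP {T : Type} (D : nat -> T -> int) k n w s : size s = n ->
  window D k n w = s <-> forall i, i \in iota k n -> D i w = nth 0 s (i - k).
Proof.
move=> size_s; split=> [<- i|Ds].
  rewrite mem_iota => /andP[ki ikn].
  by rewrite /window (nth_map 0) ?nth_iota ?subnKC ?size_iota // ltn_subLR.
apply: (@eq_from_nth _ 0); first by rewrite size_map size_iota size_s.
move=> j; rewrite size_map size_iota => jn.
by rewrite (nth_map 0) ?size_iota // nth_iota // Ds ?addKn // mem_iota leq_addr ltn_add2l.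
Qed.

Section MeasureFibers.
Context {d : measure_display} {T : measurableType d} {V : eqType} (f : T -> V).
Hypothesis mf : forall v, measurable [set w | f w = v].

Lemma fiber_mem_nil : [set w | f w \in [::]] = set0.
Proof. by apply/seteqP; split. Qed.

Lemma fiber_mem_cons v S :
  [set w | f w \in v :: S] = [set w | f w = v] `|` [set w | f w \in S].
Proof.
apply/seteqP; split=> w /=; rewrite inE; first by case/orP=> [/eqP|]; [left|right].
by case=> [->|->]; rewrite ?eqxx ?orbT.
Qed.

Lemma measurable_fiber_mem (S : seq V) : measurable [set w | f w \in S].
Proof.
elim: S => [|v S IH]; first by rewrite fiber_mem_nil.
by rewrite fiber_mem_cons; exact: measurableU.
Qed.

Lemma measure_fiber_mem {R : realType} (mu : {measure set T -> \bar R}) (S : seq V) :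
  uniq S -> mu [set w | f w \in S] = (\sum_(v <- S) mu [set w | f w = v])%E.
Proof.
elim: S => [_|v S IH /= /andP[vS uS]]; first by rewrite big_nil fiber_mem_nil measure0.
rewrite big_cons -IH // fiber_mem_cons measureU //; first exact: measurable_fiber_mem.
by apply/seteqP; split=> // w [/= -> wS]; rewrite wS in vS.
Qed.
End MeasureFibers.

(* Weaker than [walk_law]: the product rule is only required for
   [{1, -r}]-valued assignments, which is what the increments derived from the
   trust model are shown to satisfy. *)
Definition updown_law {d : measure_display} {T : measurableType d} {R : realType}
    (P : probability T R) (r : nat) (th : R) (D : nat -> T -> int) : Prop :=
  [/\ (forall i v, measurable [set w | D i w = v]),
      (forall i, P [set w | D i w = 1] = (1 - th)%:E),
      (forall i, P [set w | D i w = - r%:Z] = th%:E) &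
      (forall (I : seq nat) (v : nat -> int), uniq I ->
         (forall i, i \in I -> v i = 1 \/ v i = - r%:Z) ->
         P [set w | forall i, i \in I -> D i w = v i]
         = (\prod_(i <- I) P [set w | D i w = v i])%E)].

Section UpDownWalk.
Context {d : measure_display} {T : measurableType d} {R : realType}.
Context {P : probability T R} {r : nat} {th : R} {D : nat -> T -> int}.
Hypothesis lawD : updown_law P r th D.

Let mD : forall i v, measurable [set w | D i w = v].
Proof. by case: lawD. Qed.

Lemma measurable_window k n (Q : pred (seq int)) :
  measurable [set w | Q (window D k n w)].
Proof.
elim: n k Q => [|n IH] k Q.
  rewrite /window /=; case: (Q [::]).
    by rewrite (_ : [set _ | _] = setT) //; apply/seteqP; split.
  by rewrite (_ : [set _ | _] = set0) //; apply/seteqP; split.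
(* [int] is countable: split on the value of the first coordinate. *)
pose val j : int := odflt 0 (unpickle j).
rewrite (_ : [set w | _] = \bigcup_j ([set w | D k w = val j] `&`
                                       [set w | Q (val j :: window D k.+1 n w)])).
  apply: bigcupT_measurable => j; apply: measurableI; first exact: mD.
  exact: (IH k.+1 (fun s => Q (val j :: s))).
apply/seteqP; split=> w /=.
  by move=> Qw; exists (pickle (D k w)) => //; rewrite /val pickleK.
by move=> [j _ [<- Qw]].
Qed.

Lemma measurable_window_eq k n s : measurable [set w | window D k n w = s].
Proof.
rewrite (_ : [set w | _] = [set w | window D k n w == s]).
  exact: (measurable_window k n (fun t => t == s)).
by apply/seteqP; split=> w /= /eqP.
Qed.

Lemma window_prob k n s : s \in step_paths r n ->
  P [set w | window D k n w = s] = (path_weight th s)%:E.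
Proof.
case: lawD => _ P1 Pr prodD /mem_step_paths [size_s s_steps].
have s_nth i : i \in iota k n -> nth 0 s (i - k) = 1 \/ nth 0 s (i - k) = - r%:Z.
  by rewrite mem_iota => /andP[ki ikn]; apply/s_steps/mem_nth; rewrite size_s ltn_subLR.
rewrite (_ : [set w | _] = [set w | forall i, i \in iota k n -> D i w = nth 0 s (i - k)]).
  rewrite prodD ?iota_uniq // (eq_big_seq (fun i => (step_weight th (nth 0 s (i - k)))%:E)).
    rewrite prodEFin; congr _%:E.
    rewrite -[in iota k n](addn0 k) iotaDl big_map.
    rewrite (eq_bigr (fun i => step_weight th (nth 0 s i))) => [|i _]; last by rewrite addKn.
    by rewrite /path_weight [RHS](big_nth 0) size_s /index_iota subn0.
  by move=> i /s_nth [->|->]; rewrite ?P1 ?Pr /step_weight ?eqxx ?oppz_nat_eq1.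
by apply/seteqP; split=> w /= /(window_eqP D k n w s size_s).
Qed.

Lemma window_law k n (Q : pred (seq int)) :
  P [set w | Q (window D k n w)] = (\sum_(s <- step_paths r n | Q s) path_weight th s)%:E.
Proof.
have window_sum (S : seq (seq int)) : uniq S -> {subset S <= step_paths r n} ->
    P [set w | window D k n w \in S] = (\sum_(s <- S) path_weight th s)%:E.
  move=> uS S_paths; rewrite measure_fiber_mem //; last exact: measurable_window_eq.
  by rewrite -sumEFin; apply: eq_big_seq => s /S_paths; exact: window_prob.
set B := [set w | window D k n w \in step_paths r n].
have mB : measurable B by apply: measurable_fiber_mem; exact: measurable_window_eq.
have PnB : P (~` B) = 0%E.
  by rewrite probability_setC // window_sum ?uniq_step_paths // sum_path_weight subee.
rewrite (measureDI P (measurable_window k n Q) mB).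
rewrite [X in (X + _)%E](subset_measure0 _ _ _ PnB); last 3 first.
- by apply: measurableD => //; exact: measurable_window.
- exact: measurableC.
- by move=> w [].
rewrite add0e (_ : _ `&` _ = [set w | window D k n w \in [seq s <- step_paths r n | Q s]]).
  rewrite -big_filter; apply: window_sum; first by rewrite filter_uniq ?uniq_step_paths.
  by move=> s; rewrite mem_filter => /andP[].
apply/seteqP; split=> w /=; rewrite mem_filter; first by case=> -> ->.
by case/andP.
Qed.
End UpDownWalk.

Lemma reaches_window {T : Type} (D : nat -> T -> int) n k u w :
  reaches u (window D k n w) <-> exists2 t, (t <= n)%N & u <= \sum_(i < t) D (k + i)%N w.
Proof.
have sum_shift j t :
    \sum_(i < t.+1) D (j + i)%N w = D j w + \sum_(i < t) D (j.+1 + i)%N w.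
  by rewrite big_ord_recl addn0; congr (_ + _); apply: eq_bigr => i _; rewrite addSnnS.
elim: n k u => [|n IH] k u.
  rewrite /= orbF; split=> [u_le0|[[|t] // _]]; last by rewrite big_ord0.
  by exists 0%N; rewrite ?big_ord0.
rewrite /window /= -/(window D k.+1 n w); split.
  case/orP=> [u_le0|/IH [t tn reach_t]]; first by exists 0%N; rewrite ?big_ord0.
  by exists t.+1; rewrite // sum_shift; lra.
case=> [[|t] tn]; first by rewrite big_ord0 => ->.
by rewrite sum_shift => reach_t; apply/orP; right; apply/IH; exists t; rewrite //; lra.
Qed.

Lemma walk_reachE {T : Type} (D : nat -> T -> int) u :
  walk_reach D u = \bigcup_n [set w | reaches u (window D 0 n w)].
Proof.
apply/seteqP; split=> w /= => [[t reach_t]|[n _ /reaches_window [t _ reach_t]]].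
  by exists t => //=; apply/reaches_window; exists t.
by exists t.
Qed.

Lemma walk_reach_prob_cvg {d : measure_display} {T : measurableType d} {R : realType}
    {P : probability T R} {r : nat} {th : R} {D : nat -> T -> int} (u : int) :
  updown_law P r th D ->
  (reach_prob r th n u)%:E @[n --> \oo] --> P (walk_reach D u).
Proof.
move=> lawD.
have -> : (fun n => (reach_prob r th n u)%:E) =
          P \o (fun n => [set w | reaches u (window D 0 n w)]).
  by apply/funext => n /=; rewrite (window_law lawD).
rewrite walk_reachE; apply: nondecreasing_cvg_mu.
- by move=> n; exact: (measurable_window lawD).
- by apply: bigcupT_measurable => n; exact: (measurable_window lawD).
move=> n m nm; apply/subsetPset => w /reaches_window [t tn reach_t].
by apply/reaches_window; exists t => //; apply: leq_trans nm.
Qed.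

Section TrustWalk.
Context {R : realType} (a b r : nat) {T : Type} (X : nat -> T -> bool).
Hypothesis a_gt0 : (0 < a)%N.

Local Notation state := (trust_state (R := R) a b 1 r X).
Local Notation Shat := (S_hat (R := R) a b 1 r X).
Local Notation Fhat := (F_hat (R := R) a b 1 r X).
Local Notation ok := (trust_ok (R := R) a b 1 r).

(* Increment of [F_hat - r * S_hat] while trust is placed; index [i] reads
   the observation [X_(i+1)], matching [walkZ], which starts at index 0. *)
Definition quit_step (i : nat) (w : T) : int := if X i.+1 w then - r%:Z else 1.

Definition trusts (t : nat) (w : T) : bool := (state t w).2.

Definition trust_gap (t : nat) (w : T) : int :=
  (Fhat t w)%:Z - r%:Z * (Shat t w)%:Z.

Lemma trust_okNE s f :
  ~~ ok s f = (r%:Z * a%:Z - b%:Z + 1 <= f%:Z - r%:Z * s%:Z).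
Proof.
rewrite /trust_ok /theta_hat_of; set den : R := a%:R + b%:R + s%:R + f%:R.
have den_gt0 : 0 < den by rewrite /den !ltr_wpDr ?ler0n // ltr0n.
have -> : r%:R * ((a%:R + s%:R) / den) - 1%:R * (1 - (a%:R + s%:R) / den)
    = ((r * (a + s))%N%:R - (b + f)%N%:R) / den.
  by rewrite !natrM !natrD /den; field; exact: lt0r_neq0.
rewrite pmulr_lge0 ?invr_gt0 // subr_ge0 ler_nat -ltnNge.
by apply/idP/idP; lia.
Qed.

Lemma trustsS t w : trusts t.+1 w =
  trusts t w && ok (Shat t.+1 w) (Fhat t.+1 w).
Proof. by rewrite /trusts /S_hat /F_hat /=; case: (state t w) => [[s f] []]. Qed.

Lemma trust_gapS t w : trust_gap t.+1 w =
  if trusts t w then trust_gap t w + quit_step t w else trust_gap t w.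
Proof.
rewrite /trust_gap /trusts /S_hat /F_hat /quit_step /=.
case: (state t w) => [[s f] []] //=; by case: (X t.+1 w); rewrite /= !PoszD; ring.
Qed.

Lemma trust_gap_walk t w : trusts t w -> trust_gap t w = walkZ quit_step t w.
Proof.
elim: t => [|t IH]; first by rewrite /trust_gap /walkZ big_ord0 /= mulr0 subr0.
rewrite trustsS trust_gapS => /andP[tr_t _].
by rewrite tr_t IH // /walkZ big_ord_recr.
Qed.

Lemma trust_gap_reached t w :
  exists2 t', (t' <= t)%N & trust_gap t w = walkZ quit_step t' w.
Proof.
elim: t => [|t [t' t't gap_t]].
  by exists 0%N; rewrite // /trust_gap /walkZ big_ord0 /= mulr0 subr0.
rewrite trust_gapS; case tr_t: (trusts t w).
  by exists t.+1; rewrite // trust_gap_walk // /walkZ big_ord_recr.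
by exists t'; [exact: leqW|].
Qed.

Lemma quit_eventE :
  quit_event (R := R) a b 1 r X = walk_reach quit_step (r%:Z * a%:Z - b%:Z + 1).
Proof.
have quitE t w : (r%:R * theta_hat (R := R) a b 1 r X t w
    - 1%:R * (1 - theta_hat (R := R) a b 1 r X t w) < 0)
    = (r%:Z * a%:Z - b%:Z + 1 <= trust_gap t w).
  by rewrite ltNge; exact: trust_okNE.
apply/seteqP; split=> w /= [t].
  by rewrite quitE; have [t' _ ->] := trust_gap_reached t w; exists t'.
move=> reach_t; apply: contrapT => no_quit.
have ok_at n : ok (Shat n w) (Fhat n w).
  by apply/negPn/negP; rewrite trust_okNE => fail_n; apply: no_quit; exists n; rewrite quitE.
have tr n : trusts n w by elim: n => [|n IH]; [exact: ok_at 0%N | rewrite trustsS IH ok_at].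
by have := ok_at t; apply/negP; rewrite trust_okNE -/(trust_gap t w) (trust_gap_walk _ _ (tr t)).
Qed.
End TrustWalk.

Lemma walk_law_updown {d : measure_display} {T : measurableType d} {R : realType}
    {P : probability T R} {r : nat} {th : R} {D : nat -> T -> int} :
  walk_law P D 1 r th -> updown_law P r th D.
Proof.
by case=> -[mD lawD prodD] P1 Pr; split=> // [i|i|I v uI _]; rewrite ?lawD //; exact: prodD.
Qed.

Lemma quit_step_fiber {T : Type} r (X : nat -> T -> bool) i v :
  [set w | quit_step r X i w = v] =
  if v == 1 then [set w | X i.+1 w = false]
  else if v == - r%:Z then [set w | X i.+1 w = true] else set0.
Proof.
apply/seteqP; split=> w /=; rewrite /quit_step.
  by case Xw: (X i.+1 w) => <-; rewrite ?eqxx ?oppz_nat_eq1.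
case: ifP => [/eqP ->|_]; first by move=> ->.
by case: ifP => [/eqP ->|_] // ->.
Qed.

Lemma quit_stepP {T : Type} r (X : nat -> T -> bool) i w v : v = 1 \/ v = - r%:Z ->
  quit_step r X i w = v <-> X i.+1 w = (v == - r%:Z).
Proof.
rewrite /quit_step => -[|] ->; rewrite ?eqxx ?(eq_sym 1) ?oppz_nat_eq1; case: (X i.+1 w) => //.
  by split=> // /eqP; rewrite oppz_nat_eq1.
by split=> // /eqP; rewrite eq_sym oppz_nat_eq1.
Qed.

Lemma bernoulli_quit_step_updown {d : measure_display} {T : measurableType d}
    {R : realType} {P : probability T R} {th : R} {X : nat -> T -> bool} (r : nat) :
  bernoulli_law P X th -> updown_law P r th (quit_step r X).
Proof.
case=> -[mX lawX prodX] P1.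
have PT i : P [set w | X i w = true] = th%:E by rewrite lawX.
have PF i : P [set w | X i w = false] = (1 - th)%:E.
  rewrite lawX (_ : [set w | X 0%N w = false] = ~` [set w | X 0%N w = true]).
    by rewrite probability_setC // P1.
  by apply/seteqP; split=> w /=; case: (X 0%N w).
split=> [i v|i|i|I v uI v_steps].
- by rewrite quit_step_fiber; case: ifP => _ //; case: ifP.
- by rewrite quit_step_fiber eqxx.
- by rewrite quit_step_fiber oppz_nat_eq1 eqxx.
rewrite (_ : [set w | _] = [set w | forall j, j \in map succn I -> X j w = (v j.-1 == - r%:Z)]).
  rewrite prodX ?map_inj_uniq // => [|? ? []//]; rewrite big_map; apply: eq_big_seq => i iI.
  by congr (P _); apply/seteqP; split=> w /= /(quit_stepP r X i w _ (v_steps i iI)).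
apply/seteqP; split=> w /= Xw.
  by move=> _ /mapP [i iI ->]; apply/(quit_stepP r X i w _ (v_steps i iI))/Xw.
by move=> i iI; apply/(quit_stepP r X i w _ (v_steps i iI))/Xw/map_f.
Qed.

Theorem lemma3p3 (R : realType) (r : nat) (theta : R) :
  (0 < r)%N -> 1 / (1 + r%:R) < theta -> theta < 1 ->
  (* rho(theta): unique solution in [0,1) of rho = (1-theta) + theta rho^(r+1) *)
  (exists rho : R, [/\ 0 <= rho, rho < 1,
      rho = (1 - theta) + theta * rho ^+ r.+1 &
      forall rho' : R, 0 <= rho' -> rho' < 1 ->
        rho' = (1 - theta) + theta * rho' ^+ r.+1 -> rho' = rho]) /\
  (* pi(u,1,r,theta) = rho(theta)^u for all u in N_0 *)
  (forall rho : R, 0 <= rho -> rho < 1 ->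
     rho = (1 - theta) + theta * rho ^+ r.+1 ->
     forall (d : measure_display) (T : measurableType d) (P : probability T R)
            (Delta : nat -> T -> int),
       walk_law P Delta 1 r theta ->
       forall u : nat, P (walk_reach Delta u%:Z) = (rho ^+ u)%:E) /\
  (* p_quit(alpha,beta,1,r,theta) = pi(r alpha - beta + 1, 1, r, theta) *)
  (forall alpha beta : nat, (0 < alpha)%N -> (0 < beta)%N ->
     forall (d : measure_display) (T : measurableType d) (P : probability T R)
            (X : nat -> T -> bool),
       bernoulli_law P X theta ->
     forall (d' : measure_display) (T' : measurableType d') (P' : probability T' R)
            (Delta : nat -> T' -> int),
       walk_law P' Delta 1 r theta ->
       P (quit_event (R := R) alpha beta 1 r X)
       = P' (walk_reach Delta (r%:Z * alpha%:Z - beta%:Z + 1))).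
Proof.
move=> r_gt0 th_big th_lt1.
have th_gt0 : 0 < theta by apply: lt_trans th_big; rewrite divr_gt0 ?ltr_wpDr.
split; [|split].
- apply: exists_unique_ruin_root => //; first exact: ltW.
  by rewrite -ltr_pdivrMr ?ltr_wpDr.
- move=> rho rho_ge0 rho_lt1 fix_rho d T P D /walk_law_updown lawD u.
  have lim_rho : (reach_prob r theta n u)%:E @[n --> \oo] --> (rho ^+ u)%:E.
    apply: cvg_EFin; first exact: nearW.
    by apply: reach_prob_cvg; rewrite ?th_gt0 ?rho_ge0.
  exact: (cvg_unique _ (walk_reach_prob_cvg u%:Z lawD) lim_rho).
move=> a b a_gt0 _ d T P X /(bernoulli_quit_step_updown r) lawX d' T' P' D /walk_law_updown lawD.
rewrite quit_eventE //.
exact: (cvg_unique _ (walk_reach_prob_cvg _ lawX) (walk_reach_prob_cvg _ lawD)).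
Qed.
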